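(* Let $H=(V_1,\dots,V_d,E)$ be a finite $d$-partite hypergraph with $E\neq\emptyset$, and let $W_j\subseteq V_j$ for $j=1,\dots,d$. Then for every $i=1,\dots,d$, \[ disc_H(W_1,\dots,W_d)\leq disc_{B_i}\big(W_i,E_i(W_1,\dots,W_d)\big)+\frac{|W_i|}{|V_i|}\,disc_{H_i}(W_1,\dots,W_{i-1},W_{i+1},\dots,W_d). \]
   Context: A $d$-partite hypergraph $H=(V_1,\dots,V_d,E)$ has vertex set $V_1\sqcup\dots\sqcup V_d$ and edges $E\subseteq\prod_{i=1}^dV_i$ (each edge is a $d$-set with exactly one vertex in each $V_i$). For $W_j\subseteq V_j$, $E(W_1,\dots,W_d)=E\cap\prod_j W_j$ and $disc_H(W_1,\dots,W_d)=\left|\frac{|E(W_1,\dots,W_d)|}{|E|}-\prod_{j=1}^d\frac{|W_j|}{|V_j|}\right|$. For each $i$, $E_i=\{e\setminus\{v\}: e\in E,\ v\in e\cap V_i\}$ (walls of cotype $i$), $H_i=(V_1,\dots,V_{i-1},V_{i+1},\dots,V_d,E_i)$ is the induced $(d-1)$-partite hypergraph, $E_i(W_1,\dots,W_d)=E_i\cap\prod_{j\ne i}W_j$, and $disc_{H_i}(W_1,\dots,W_{i-1},W_{i+1},\dots,W_d)=\left|\frac{|E_i(W_1,\dots,W_d)|}{|E_i|}-\prod_{j\ne i}\frac{|W_j|}{|V_j|}\right|$. $B_i$ is the bipartite graph with vertex sides $V_i$ and $E_i$, where $v\in V_i$ and $Y\in E_i$ are adjacent iff $\{v\}\cup Y\in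 E$; its edge set is $E_{B_i}$. For a bipartite graph with sides $V,V'$ and edge set $E'$, and $S\subseteq V$, $T\subseteq V'$, $disc(S,T)=\left|\frac{|E'(S,T)|}{|E'|}-\frac{|S|}{|V|}\frac{|T|}{|V'|}\right|$. *)

From mathcomp Require Import all_boot all_order all_algebra.
Set Implicit Arguments. Unset Strict Implicit. Unset Printing Implicit Defensive.
Import Order.TTheory GRing.Theory Num.Theory.
Local Open Scope ring_scope.

(* A d-partite hypergraph on a finite vertex type T: [part x] is the index
   of the class V_i containing x, edges are sets of vertices with exactly
   one vertex in each class. *)
Section Hyper.
Variables (T : finType) (d : nat) (part : T -> 'I_d).

Definition Vp (i : 'I_d) : {set T} := [set x | part x == i].

Definition is_edge (e : {set T}) : bool := [forall i, #|e :&: Vp i| == 1%N].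

Variable E : {set {set T}}.
Variable W : 'I_d -> {set T}.

Definition EW : {set {set T}} :=
  [set e in E | [forall j, e :&: Vp j \subset W j]].

Definition walls (i : 'I_d) : {set {set T}} :=
  [set Y | [exists e in E, exists v in e :&: Vp i, Y == e :\ v]].

Definition wallsW (i : 'I_d) : {set {set T}} :=
  [set Y in walls i | [forall j, (j != i) ==> (Y :&: Vp j \subset W j)]].

Definition EB (i : 'I_d) : {set T * {set T}} :=
  [set p | [&& p.1 \in Vp i, p.2 \in walls i & (p.1 |: p.2) \in E]].

Definition fracn (R : numFieldType) (a b : nat) : R := a%:R / b%:R.

Definition disc_H (R : numFieldType) : R :=
  `| fracn R #|EW| #|E| - \prod_(j < d) fracn R #|W j| #|Vp j| |.

Definition disc_Hi (R : numFieldType) (i : 'I_d) : R :=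
  `| fracn R #|wallsW i| #|walls i|
     - \prod_(j < d | j != i) fracn R #|W j| #|Vp j| |.
End Hyper.

Definition disc_bip (R : numFieldType) (X Y : finType)
  (A : {set X}) (B : {set Y}) (F : {set X * Y}) (S : {set X}) (U : {set Y}) : R :=
  `| fracn R #|[set p in F | (p.1 \in S) && (p.2 \in U)]| #|F|
     - fracn R #|S| #|A| * fracn R #|U| #|B| |.

From mathcomp Require Import all_boot all_order all_algebra.
From mathcomp Require Import ring.
Import Order.TTheory GRing.Theory Num.Theory.
Local Open Scope ring_scope.

(* Gluing a vertex v of V_i to a wall Y of cotype i, (v, Y) |-> {v} u Y, is a
   bijection from the edges of B_i onto E which maps the edges of B_i between
   W_i and E_i(W) onto E(W).  Hence |E(W)|/|E| is the edge density of B_i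
   between W_i and E_i(W), and the inequality is the triangle inequality
   |a - b p| <= |a - b c| + b |c - p| with b = |W_i|/|V_i|. *)

Section Gluing.
Local Set Implicit Arguments.
Local Unset Strict Implicit.
Variables (T : finType) (d : nat) (part : T -> 'I_d).
Variables (E : {set {set T}}) (i : 'I_d).
Hypothesis edgeE : forall e, e \in E -> is_edge part e.

Lemma edge_meet_part e : is_edge part e -> exists v, e :&: Vp part i = [set v].
Proof. by move=> /forallP /(_ i) /cards1P. Qed.

Lemma wall_meet_part0 Y : Y \in walls part E i -> Y :&: Vp part i = set0.
Proof.
rewrite inE => /existsP [e /andP [eE /existsP [v /andP [ve /eqP ->]]]].
have [u eVu] := edge_meet_part (edgeE eE); move: ve; rewrite eVu inE => /eqP ->.
by rewrite setIDAC eVu setDv.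
Qed.

Definition glue (p : T * {set T}) : {set T} := p.1 |: p.2.

Lemma glue_meet_part p : p \in EB part E i -> glue p :&: Vp part i = [set p.1].
Proof.
rewrite inE => /and3P [p1V p2W _].
rewrite /glue setIUl (wall_meet_part0 p2W) setU0.
apply/setP => x; rewrite !inE andb_idr // => /eqP ->.
by move: p1V; rewrite inE.
Qed.

Lemma glue_setD1 p : p \in EB part E i -> glue p :\ p.1 = p.2.
Proof.
move=> pB; rewrite /glue setU1K //; apply/negP => p12.
move: pB; rewrite inE => /and3P [p1V p2W _].
by have := wall_meet_part0 p2W; move/setP/(_ p.1); rewrite in_setI p12 p1V inE.
Qed.

Lemma glue_inj : {in EB part E i &, injective glue}.
Proof.
move=> [v Y] [u Z] pB qB gpq.
have vu : v = u.
  by have := glue_meet_part pB; rewrite gpq glue_meet_part // => /set1_inj.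
have YZ : Y = Z.
  by move: (glue_setD1 pB) (glue_setD1 qB); rewrite gpq /= vu => -> ->.
by rewrite vu YZ.
Qed.

Lemma glue_EB : glue @: EB part E i = E.
Proof.
apply/setP => e; apply/imsetP/idP => [[p pB ->]|eE].
  by move: pB; rewrite inE => /and3P [].
have [v eVv] := edge_meet_part (edgeE eE).
have /setIP [ve vV] : v \in e :&: Vp part i by rewrite eVv set11.
exists (v, e :\ v); last by rewrite /glue setD1K.
rewrite inE /= vV setD1K // eE andbT inE.
apply/exists_inP; exists e => //; apply/exists_inP; exists v => //.
by rewrite eVv set11.
Qed.

Variable W : 'I_d -> {set T}.

Definition EB_W : {set T * {set T}} :=
  [set p in EB part E i | (p.1 \in W i) && (p.2 \in wallsW part E W i)].

(* Away from V_i a glued edge and its wall coincide; on V_i it is {v}. *)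
Lemma glue_in_EW p : p \in EB part E i ->
  (glue p \in EW part E W) = (p.1 \in W i) && (p.2 \in wallsW part E W i).
Proof.
move=> pB; have gE : glue p \in E by move: pB; rewrite inE => /and3P [].
have := pB; rewrite inE => /and3P [p1V p2W _].
rewrite [p.2 \in _]inE p2W inE gE /=.
have glue_meet_other j : j != i -> glue p :&: Vp part j = p.2 :&: Vp part j.
  move=> ji; rewrite /glue setIUl; apply/setP => x; rewrite !inE.
  case: eqP => [->|] //=; move: p1V; rewrite inE => /eqP ->.
  by rewrite eq_sym (negbTE ji) andbF.
apply/forallP/andP => [sub|[p1W /forallP p2sub] j].
  split; first by have := sub i; rewrite glue_meet_part // sub1set.
  by apply/forallP => j; apply/implyP => ji; rewrite -glue_meet_other.
have [->|ji] := eqVneq j i; first by rewrite glue_meet_part // sub1set.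
by rewrite glue_meet_other //; have := p2sub j; rewrite ji.
Qed.

Lemma glue_EB_W : glue @: EB_W = EW part E W.
Proof.
apply/setP => e; apply/imsetP/idP => [[p pBW ->]|eW].
  by move: pBW; rewrite inE => /andP [pB ?]; rewrite glue_in_EW.
have eE : e \in E by move: eW; rewrite inE => /andP [].
move: eE; rewrite -glue_EB => /imsetP [p pB ep]; exists p => //.
by rewrite inE pB -glue_in_EW -?ep.
Qed.

Lemma card_EB : #|EB part E i| = #|E|.
Proof. by rewrite -{2}glue_EB card_in_imset //; apply: glue_inj. Qed.

Lemma card_EB_W : #|EB_W| = #|EW part E W|.
Proof.
rewrite -glue_EB_W card_in_imset // => p q.
by move=> /setIdP [pB _] /setIdP [qB _]; apply: glue_inj.
Qed.

End Gluing.

Lemma ler_normB_mul (R : numDomainType) (a b c p : R) : 0 <= b ->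
  `|a - b * p| <= `|a - b * c| + b * `|c - p|.
Proof.
move=> b0; have -> : a - b * p = (a - b * c) + b * (c - p) by ring.
by rewrite (le_trans (ler_normD _ _)) // normrM ger0_norm.
Qed.

Theorem lemma3p5 (R : realFieldType) (T : finType) (d : nat)
  (part : T -> 'I_d) (E : {set {set T}}) (W : 'I_d -> {set T}) :
  (forall e, e \in E -> is_edge part e) ->
  E != set0 ->
  (forall j, W j \subset Vp part j) ->
  forall i : 'I_d,
    disc_H part E W R <=
      disc_bip R (Vp part i) (walls part E i) (EB part E i) (W i) (wallsW part E W i)
      + fracn R #|W i| #|Vp part i| * disc_Hi part E W R i.
Proof.
move=> edgeE _ _ i.
rewrite /disc_H /disc_bip /disc_Hi (card_EB i edgeE).
rewrite -/(EB_W part E i W) (card_EB_W i edgeE W) (bigD1 i) //=.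
by apply: ler_normB_mul; rewrite divr_ge0 ?ler0n.
Qed.
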